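(* Let $E$ be a finite set, $V \subset \mathbb R^E$ a linear subspace with oriented matroid $M$, and $Y_V$ its matroid Schubert variety. If $F \subset G \subset E$ are flats of $M$, then \[ Y_V \cap (0^F \times \mathbb R_{>0}^{G\setminus F} \times \infty^{E \setminus G}) = \big(\pi_G(V) \cap (0^F \times \mathbb R_{>0}^{G\setminus F})\big) \times \infty^{E \setminus G}. \] In particular, $Y_V \cap (0^F \times \mathbb R_{>0}^{G \setminus F} \times \infty^{E \setminus G})$ is nonempty if and only if $F$ is an acyclic flat of $M|_G$.
   Context: $\mathbb P^1_{\mathbb R} = \mathbb R \cup\{\infty\}$; $Y_V$ is the Zariski closure of $V$ in $(\mathbb P^1_{\mathbb R})^E$. Notation $0^A \times S^B \times \infty^C$ (for a partition $E = A\sqcup B\sqcup C$) means points whose coordinates are $0$ on $A$, in $S$ on $B$, and $\infty$ on $C$; similarly in $\mathbb R^G$. $\pi_G:\mathbb R^E \to \mathbb R^G$ is the coordinate projection. The oriented matroid $M$ of $V$ has covectors the sign vectors $s(v)\in\{-,0,+\}^E$ of $v \in V$; flats are zero sets of covectors. $M|_G$ is the oriented matroid on $G$ with covectors the restrictions to $G$ of covectors of $M$ (equivalently the oriented matroid of $\pi_G(V)$). $F$ is an acyclic flat of $M|_G$ if the sign vector that is $0$ on $F$ and $+$ on $G\setminus F$ is a covector of $M|_G$. *)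

From HB Require Import structures.
From mathcomp Require Import all_boot all_order all_algebra.
From mathcomp Require Import reals.
From mathcomp Require Import mpoly.

Set Implicit Arguments.
Unset Strict Implicit.
Unset Printing Implicit Defensive.

Import Order.TTheory GRing.Theory Num.Theory.
Local Open Scope ring_scope.

(* The ground set E is modelled as 'I_n.  Vectors of R^E are row vectors 'rV[R]_n,
   and V is a linear subspace {vspace 'rV[R]_n}. *)

(* Points of P^1_R = R \cup {oo}: [Some a] is a in R, [None] is oo. *)
Definition P1 (R : Type) := option R.

Definition P1pt (R : Type) (n : nat) := 'I_n -> P1 R.

Definition embR (R : Type) (n : nat) (v : 'rV[R]_n) : P1pt R n :=
  fun i => Some (v ord0 i).

(* Multihomogeneous coordinates on (P^1)^E: variables 'X_(lshift n i) = x_i and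
   'X_(rshift n i) = y_i; the point a in R has coordinates (a : 1), oo has (1 : 0). *)
Definition hcoords (R : nzRingType) (n : nat) (p : P1pt R n) : 'I_(n + n) -> R :=
  fun k => match split k with
           | inl i => match p i with Some a => a | None => 1 end
           | inr i => match p i with Some _ => 1 | None => 0 end
           end.

Definition multihomog (R : nzRingType) (n : nat) (f : {mpoly R[n + n]}) : Prop :=
  exists d : 'I_n -> nat,
    forall m, m \in msupp f -> forall i, (m (lshift n i) + m (rshift n i))%N = d i.

(* Vanishing of a multihomogeneous polynomial at a point of (P^1)^E
   (well defined, independent of the chosen homogeneous coordinates). *)
Definition vanishes_at (R : nzRingType) (n : nat) (f : {mpoly R[n + n]}) (p : P1pt R n) : Prop :=
  f.@[hcoords p] = 0.

Definition zariski_closure (R : nzRingType) (n : nat) (S : P1pt R n -> Prop) : P1pt R n -> Prop :=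
  fun p => forall f : {mpoly R[n + n]}, multihomog f ->
             (forall q, S q -> vanishes_at f q) -> vanishes_at f p.

Definition schubert_variety (R : realType) (n : nat) (V : {vspace 'rV[R]_n}) : P1pt R n -> Prop :=
  zariski_closure (fun q => exists2 v, v \in V & q = embR v).

Inductive sign := SNeg | SZero | SPos.

Definition sgn (R : realType) (a : R) : sign :=
  if a == 0 then SZero else if 0 < a then SPos else SNeg.

Definition signvec (R : realType) (n : nat) (v : 'rV[R]_n) : 'I_n -> sign :=
  fun i => sgn (v ord0 i).

Definition covector (R : realType) (n : nat) (V : {vspace 'rV[R]_n}) (s : 'I_n -> sign) : Prop :=
  exists2 v, v \in V & forall i, s i = signvec v i.

Definition flat (R : realType) (n : nat) (V : {vspace 'rV[R]_n}) (F : {set 'I_n}) : Prop :=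
  exists s, covector V s /\ forall i, (i \in F) <-> s i = SZero.

(* covectors of the restriction M|_G: restrictions to G of covectors of M
   (a sign vector on G is represented by a function on E, only its values on G matter) *)
Definition covector_restr (R : realType) (n : nat) (V : {vspace 'rV[R]_n}) (G : {set 'I_n})
    (s : 'I_n -> sign) : Prop :=
  exists t, covector V t /\ forall i, i \in G -> s i = t i.

Definition acyclic_flat_restr (R : realType) (n : nat) (V : {vspace 'rV[R]_n}) (G F : {set 'I_n}) : Prop :=
  covector_restr V G (fun i => if i \in F then SZero else SPos).

Definition cell (R : realType) (n : nat) (F G : {set 'I_n}) (p : P1pt R n) : Prop :=
  forall i,
    (i \in F -> p i = Some 0) /\
    (i \in G :\: F -> exists2 a : R, 0 < a & p i = Some a) /\
    (i \notin G -> p i = None).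

Definition coordproj (R : Type) (n : nat) (G : {set 'I_n}) (v : 'rV[R]_n) : {x | x \in G} -> R :=
  fun x => v ord0 (sval x).
Arguments coordproj {R n} G v.

Definition proj_cell (R : realType) (n : nat) (V : {vspace 'rV[R]_n}) (F G : {set 'I_n})
    (p : P1pt R n) : Prop :=
  exists w : {x | x \in G} -> R,
    (exists2 v, v \in V & w = coordproj G v) /\
    (forall x : {x | x \in G}, sval x \in F -> w x = 0) /\
    (forall x : {x | x \in G}, sval x \notin F -> 0 < w x) /\
    (forall x : {x | x \in G}, p (sval x) = Some (w x)) /\
    (forall i, i \notin G -> p i = None).

From HB Require Import structures.
From mathcomp Require Import all_boot all_order all_algebra.
From mathcomp Require Import reals.
From mathcomp Require Import mpoly.

Set Implicit Arguments.
Unset Strict Implicit.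
Unset Printing Implicit Defensive.

Import Order.TTheory GRing.Theory Num.Theory.
Local Open Scope ring_scope.

(* Pick u in V whose zero set is exactly the flat G.  For v in V the curve
   s |-> v + s^-1 u lies in V and tends, as s -> 0, to the point that is v on G
   and oo off G; after rescaling the homogeneous coordinates off G by s, any
   multihomogeneous polynomial vanishing on V restricts to a polynomial in s
   vanishing for s <> 0, hence also at the limit.  Conversely pi_G(V) is cut out
   by linear forms in the coordinates of G, and their multihomogenizations vanish
   on V, so a point of Y_V that is finite on G lies in pi_G(V) there.  The sign
   conditions of the cell then match those defining the acyclic flat F. *)

Lemma split_lshift m n (i : 'I_m) : split (lshift n i) = inl i.
Proof. exact: (unsplitK (inl _ i)). Qed.

Lemma split_rshift m n (i : 'I_n) : split (rshift m i) = inr i.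
Proof. exact: (unsplitK (inr _ i)). Qed.

Lemma horner_mmap (R : comNzRingType) k (f : {mpoly R[k]}) (H : 'I_k -> {poly R}) s :
  (mmap polyC H f).[s] = f.@[fun i => (H i).[s]].
Proof.
rewrite /mmap mevalE horner_sum; apply: eq_bigr => m _.
by rewrite hornerCM horner_prod; congr (_ * _); apply: eq_bigr => i _; rewrite horner_exp.
Qed.

Lemma poly_vanishing_off0_eq0 (R : numDomainType) (P : {poly R}) :
  (forall s, s != 0 -> P.[s] = 0) -> P = 0.
Proof.
move=> HP; apply/eqP; apply: contraT => nz.
have := max_poly_roots nz (rs := [seq (i.+1)%:R | i <- iota 0 (size P)]).
rewrite size_map size_iota ltnn; apply.
  by apply/allP => x /mapP [i _ ->]; rewrite /root HP // pnatr_eq0.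
by rewrite map_inj_uniq ?iota_uniq // => i j /eqP; rewrite eqr_nat eqSS => /eqP.
Qed.

Lemma separating_form (K : fieldType) n (W : {vspace 'rV[K]_n}) z : z \notin W ->
  exists c : 'I_n -> K,
    (forall w, w \in W -> \sum_i w ord0 i * c i = 0) /\ \sum_i z ord0 i * c i != 0.
Proof.
move=> zW; pose e := z - projv W z.
have [j ej] : exists j, e ord0 j != 0.
  apply/existsP; apply: contraR zW => /existsPn e0.
  have -> : z = projv W z.
    apply/eqP; rewrite -subr_eq0 -/e; apply/eqP/matrixP => i k.
    by rewrite ord1 [RHS]mxE; apply/eqP; rewrite -[_ == _]negbK e0.
  exact: memv_proj.
pose phi x := (x - projv W x) ord0 j.
have phiE x : phi x = \sum_i x ord0 i * phi (delta_mx ord0 i).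
  rewrite /phi {1 2}(row_sum_delta x) linear_sum /= -sumrB summxE.
  by apply: eq_bigr => i _; rewrite linearZ /= -scalerBr mxE.
exists (fun i => phi (delta_mx ord0 i)); split=> [w wW|]; rewrite -phiE //.
by rewrite /phi projv_id // subrr mxE.
Qed.

Definition hfactor n (k : 'I_(n + n)) : 'I_n :=
  match split k with inl i => i | inr i => i end.

Lemma meval_hscale (R : comNzRingType) n (f : {mpoly R[n + n]}) (d : 'I_n -> nat) :
  (forall m, m \in msupp f -> forall i, (m (lshift n i) + m (rshift n i))%N = d i) ->
  forall (z : 'I_(n + n) -> R) (c : 'I_n -> R),
  f.@[fun k => c (hfactor k) * z k] = (\prod_i c i ^+ d i) * f.@[z].
Proof.
move=> Hd z c; rewrite !mevalE mulr_sumr; apply: eq_big_seq => m Hm.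
rewrite mulrCA; congr (_ * _).
under eq_bigr do rewrite exprMn.
rewrite big_split /= big_split_ord /= -big_split /=; congr (_ * _).
apply: eq_bigr => i _.
by rewrite /hfactor split_lshift split_rshift -exprD Hd.
Qed.

Lemma meval_hscale_eq0 (R : idomainType) n (f : {mpoly R[n + n]}) z (c : 'I_n -> R) :
  multihomog f -> (forall i, c i != 0) ->
  (f.@[fun k => c (hfactor k) * z k] == 0) = (f.@[z] == 0).
Proof.
move=> [d Hd] c0; rewrite (meval_hscale Hd) mulf_eq0 prodf_seq_eq0.
by rewrite (negbTE (introN hasP _)) // => -[i _ /=]; rewrite expf_eq0 (negbTE (c0 i)) andbF.
Qed.

(* The multihomogenization over the factors in G of the linear form
   sum_(i in G) c i * x_i: its monomials are x_i * prod_(l in G, l != i) y_l. *)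
Definition hlinear_mon n (G : {set 'I_n}) (i : 'I_n) : 'X_{1..n + n} :=
  [multinom match split k with
            | inl l => (l == i : nat)
            | inr l => ((l \in G) && (l != i) : nat) end | k < n + n].

Definition hlinear (R : ringType) n (G : {set 'I_n}) (c : 'I_n -> R) : {mpoly R[n + n]} :=
  \sum_(i in G) c i *: 'X_[hlinear_mon G i].

Lemma hlinear_multihomog (R : nzRingType) n (G : {set 'I_n}) (c : 'I_n -> R) :
  multihomog (hlinear G c).
Proof.
exists (fun l => (l \in G : nat)) => m /msupp_sum_le /flattenP [s /mapP [i]].
rewrite mem_filter => /andP [iG _] -> /msuppZ_le; rewrite msuppX inE => /eqP -> l.
rewrite !mnmE split_lshift split_rshift.
by case: (eqVneq l i) => [->|li] /=; rewrite ?iG ?andbT.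
Qed.

Lemma meval_hlinear (R : comNzRingType) n (G : {set 'I_n}) (c : 'I_n -> R) z :
  (forall l, l \in G -> z (rshift n l) = 1) ->
  (hlinear G c).@[z] = \sum_(i in G) c i * z (lshift n i).
Proof.
move=> z1; rewrite raddf_sum; apply: eq_bigr => i iG.
rewrite /= mevalZ mevalX big_split_ord /=; congr (_ * _).
rewrite (bigD1 i) //= mnmE split_lshift eqxx big1 => [|l /negbTE li]; last first.
  by rewrite mnmE split_lshift li.
rewrite mulr1 big1 ?mulr1 // => l _; rewrite mnmE split_rshift.
by have [lG|lG] := boolP (l \in G); rewrite /= ?expr0 ?z1 ?expr1n.
Qed.

Section ClosureOfSubspace.
Variables (R : numFieldType) (n : nat) (V : {vspace 'rV[R]_n}).

Let Y := zariski_closure (fun q : P1pt R n => exists2 v, v \in V & q = embR v).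

Lemma closure_limit (G : {set 'I_n}) (u v : 'rV[R]_n) (p : P1pt R n) :
  u \in V -> v \in V -> (forall i, (i \in G) = (u ord0 i == 0)) ->
  (forall i, i \in G -> p i = Some (v ord0 i)) -> (forall i, i \notin G -> p i = None) ->
  Y p.
Proof.
move=> uV vV Hu HpG HpN f fmh fV.
(* [H] parametrizes v + s^-1 u in homogeneous coordinates rescaled by s off G:
   these are polynomial in s, and at s = 0 they are coordinates of p. *)
pose H k : {poly R} := match split k with
  | inl i => if i \in G then (v ord0 i)%:P else (u ord0 i)%:P + (v ord0 i)%:P * 'X
  | inr i => if i \in G then 1 else 'X end.
have curve_coords s : s != 0 -> (fun k => (H k).[s]) =1
    (fun k => (if hfactor k \in G then 1 else s) * hcoords (embR (v + s^-1 *: u)) k).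
  move=> s0 k; rewrite /H /hfactor /hcoords /embR.
  case: (split k) => i; case: ifP => iG; rewrite ?hornerE ?mxE ?mul1r //.
    by move: iG; rewrite Hu => /eqP ->; rewrite mulr0 addr0.
  by rewrite mulrDr mulrA mulfV // mul1r addrC mulrC.
have curve0 : mmap polyC H f = 0.
  apply: poly_vanishing_off0_eq0 => s s0; apply/eqP.
  rewrite horner_mmap (meval_eq _ (curve_coords s s0)).
  rewrite (meval_hscale_eq0 _ fmh (c := fun i => if i \in G then 1 else s)).
    by apply/eqP/fV; exists (v + s^-1 *: u); rewrite // memvD // memvZ.
  by move=> i; case: ifP; rewrite ?oner_neq0.
have limit_coords : (fun k => (H k).[0]) =1
    (fun k => (if hfactor k \in G then 1 else u ord0 (hfactor k)) * hcoords p k).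
  move=> k; rewrite /H /hfactor /hcoords.
  case: (split k) => i; have [iG|iG] := boolP (i \in G); rewrite ?hornerE.
  - by rewrite HpG // mul1r.
  - by rewrite HpN // mulr1.
  - by rewrite HpG // mul1r.
  - by rewrite HpN // mulr0.
apply/eqP; rewrite /vanishes_at.
rewrite -(meval_hscale_eq0 _ fmh (c := fun i => if i \in G then 1 else u ord0 i)).
  by rewrite -(meval_eq _ limit_coords) -horner_mmap curve0 horner0.
by move=> i; case: ifPn; rewrite ?oner_neq0 // Hu.
Qed.

Lemma closure_proj (G : {set 'I_n}) (p : P1pt R n) (a : 'I_n -> R) :
  Y p -> (forall i, i \in G -> p i = Some (a i)) ->
  exists2 v, v \in V & forall i, i \in G -> a i = v ord0 i.
Proof.
move=> Yp Hp.
pose D : 'M[R]_n := diag_mx (\row_j (j \in G)%:R).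
have DE x i : (x *m D) ord0 i = if i \in G then x ord0 i else 0.
  by rewrite mul_mx_diag !mxE; case: ifP; rewrite ?mulr1 ?mulr0.
pose W := (linfun (mulmxr D) @: V)%VS.
pose z : 'rV[R]_n := \row_i (if i \in G then a i else 0).
have [/memv_imgP [v vV zE] | zW] := boolP (z \in W).
  exists v => // i iG; have := congr1 (fun x : 'rV_n => x ord0 i) zE.
  by rewrite lfunE /= DE !mxE iG.
have [c [cW cz]] := separating_form zW.
have : vanishes_at (hlinear G c) p.
  apply: Yp (hlinear_multihomog G c) _ => _ [v vV ->].
  rewrite /vanishes_at meval_hlinear => [|l _]; last by rewrite /hcoords split_rshift.
  rewrite -[RHS](cW _ (memv_img (linfun (mulmxr D)) vV)) big_mkcond; apply: eq_bigr => i _.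
  by rewrite lfunE /= DE /hcoords split_lshift /embR; case: ifP; rewrite ?mul0r // mulrC.
rewrite /vanishes_at meval_hlinear => [|l lG]; last by rewrite /hcoords split_rshift Hp.
move=> sum0; case/negP: cz; apply/eqP; rewrite -[RHS]sum0 [RHS]big_mkcond; apply: eq_bigr => i _.
by rewrite /hcoords split_lshift !mxE; case: (boolP (i \in G)) => iG; rewrite ?Hp ?mul0r // mulrC.
Qed.

End ClosureOfSubspace.

Section SignConditions.
Variables (R : realType) (n : nat).
Implicit Types (V : {vspace 'rV[R]_n}) (F G : {set 'I_n}) (p : P1pt R n).

Lemma sgn_eq0 (a : R) : sgn a = SZero <-> a = 0.
Proof. by rewrite /sgn; case: eqP => [-> //| a0]; case: ifP => _; split=> // /a0. Qed.

Lemma sgn_gt0 (a : R) : sgn a = SPos <-> 0 < a.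
Proof. by rewrite /sgn; case: eqP => [->|_]; [rewrite ltxx | case: ifP]. Qed.

Lemma flat_zero_set V G : flat V G ->
  exists2 u, u \in V & forall i, (i \in G) = (u ord0 i == 0).
Proof.
case=> s [[u uV Hs] HG]; exists u => // i.
by apply/idP/eqP => [/HG | /sgn_eq0 u0]; [rewrite Hs => /sgn_eq0 | apply/HG; rewrite Hs].
Qed.

Lemma cell_finite_on F G p : cell F G p ->
  forall i, i \in G -> p i = Some (odflt 0 (p i)).
Proof.
move=> cp i iG; have [pF [pGF _]] := cp i.
have [iF|iF] := boolP (i \in F); first by rewrite pF.
by have [|a _ ->] := pGF; rewrite ?inE ?iF.
Qed.

Lemma cell_someE F G p (v : 'rV[R]_n) : F \subset G ->
  (forall i, i \in G -> p i = Some (v ord0 i)) ->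
  cell F G p <-> [/\ forall i, i \in F -> v ord0 i = 0,
                     forall i, i \in G :\: F -> 0 < v ord0 i
                   & forall i, i \notin G -> p i = None].
Proof.
move=> /subsetP FG HpG; split=> [cp | [v0 vpos pN] i].
  split=> i; have [pF [pGF pN]] := cp i => //.
  - by move=> iF; move: (pF iF); rewrite HpG ?FG // => -[].
  - move=> iGF; have [a a0] := pGF iGF.
    by rewrite HpG; [case=> -> | move: iGF; rewrite inE => /andP[]].
split; [|split]; last exact: pN.
  by move=> iF; rewrite HpG ?FG // v0.
move=> iGF; exists (v ord0 i); first exact: vpos.
by apply: HpG; move: iGF; rewrite inE => /andP[].
Qed.

Lemma proj_cellE V F G p : F \subset G ->
  proj_cell V F G p <->
  exists2 v, v \in V & (forall i, i \in G -> p i = Some (v ord0 i)) /\ cell F G p.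
Proof.
move=> FG; split=> [[_ [[v vV ->] [wF [wGF [pG pN]]]]] | [v vV [HpG cp]]].
  have HpG i (iG : i \in G) : p i = Some (v ord0 i) := pG (exist _ i iG).
  exists v => //; split => //; apply/(cell_someE FG HpG); split => // i.
  - by move=> iF; exact: (wF (exist _ i (subsetP FG i iF))).
  - by rewrite inE => /andP [iF iG]; exact: (wGF (exist _ i iG)).
have [v0 vpos pN] := (cell_someE FG HpG).1 cp.
exists (coordproj G v); split; first by exists v.
split; [|split; [|split]] => // -[i iG] /=; rewrite /coordproj /=.
- exact: v0.
- by move=> iF; apply: vpos; rewrite inE iF.
- exact: HpG.
Qed.

Lemma acyclic_flat_restrP V F G : F \subset G ->
  acyclic_flat_restr V G F <->
  exists2 v, v \in V & (forall i, i \in F -> v ord0 i = 0) /\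
                       (forall i, i \in G :\: F -> 0 < v ord0 i).
Proof.
move=> /subsetP FG; split=> [[t [[v vV Ht] Hv]] | [v vV [v0 vpos]]].
  exists v => //; split=> i.
    by move=> iF; apply/sgn_eq0; rewrite -[LHS]/(signvec v i) -Ht -Hv ?FG ?iF.
  rewrite inE => /andP [iF iG]; apply/sgn_gt0.
  by rewrite -[LHS]/(signvec v i) -Ht -Hv // (negbTE iF).
exists (signvec v); split; first by exists v.
move=> i iG; rewrite /signvec; case: ifPn => iF.
  by apply/esym/sgn_eq0/v0.
by apply/esym/sgn_gt0/vpos; rewrite inE iF.
Qed.

End SignConditions.

Theorem lemma3p1 (R : realType) (n : nat) (V : {vspace 'rV[R]_n}) (F G : {set 'I_n}) :
  flat V F -> flat V G -> F \subset G ->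
  (forall p : P1pt R n, schubert_variety V p /\ cell F G p <-> proj_cell V F G p) /\
  ((exists p : P1pt R n, schubert_variety V p /\ cell F G p) <-> acyclic_flat_restr V G F).
Proof.
move=> _ /flat_zero_set [u uV HuG] FG.
have cellE p : schubert_variety V p /\ cell F G p <-> proj_cell V F G p.
  rewrite proj_cellE //; split=> [[Yp cp] | [v vV [HpG cp]]].
    have HpG := cell_finite_on cp.
    have [v vV Hv] := closure_proj Yp HpG.
    by exists v => //; split=> // i iG; rewrite HpG // Hv.
  split=> //; have [_ _ pN] := (cell_someE FG HpG).1 cp.
  exact: closure_limit uV vV HuG HpG pN.
split=> //; rewrite acyclic_flat_restrP //; split.
  case=> p /cellE; rewrite proj_cellE // => -[v vV [HpG cp]].
  by have [v0 vpos _] := (cell_someE FG HpG).1 cp; exists v.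
case=> v vV [v0 vpos]; exists (fun i => if i \in G then Some (v ord0 i) else None).
have HpG i : i \in G -> (if i \in G then Some (v ord0 i) else None) = Some (v ord0 i).
  by move=> ->.
apply/cellE/proj_cellE => //; exists v => //; split => //.
by apply/(cell_someE FG HpG); split=> // i /negbTE ->.
Qed.
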